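(* Let $\{\mathbf{G}_k\}_{k\ge1}$ be (any realization of) the observed chain of the Sampled Moran Genealogy Process with population size $n$, sample times $t_1<t_2<\cdots$ and attachment times $\{a_k\}_{k\ge2}$, and define $m(j,k)$ as below. Then for every $k\ge2$, \[ \sum_{j=1}^{k-1}\ \sum_{e\in\mathrm{live}(\mathbf{G}_j)}\log\frac{n-\ell_j(e)}{n-\ell_j(e)-1}\,\mathbf 1\{e>a_{j+1}\}=\sum_{j=1}^{k-1}\log\frac{n}{n-m(j,k)}. \]
   Context: In the Sampled Moran Genealogy Process, a population of constant size $n$ evolves under Moran dynamics (at rate-$\mu$ events an ordered pair of distinct individuals is chosen uniformly, the first dies and the second gives birth), and at each deterministic time $t_i$ ($t_1<t_2<\cdots$) one living individual is sampled. The observed genealogy $\mathbf{G}_k$ is the genealogy formed by the ancestral lineages of samples $1,\dots,k$ (sample $i$'s lineage traced back from $t_i$). For $j\ge2$ the attachment time $a_j\le t_{j-1}$ is the most recent time $s$ at which the ancestor at time $s$ of sample $j$ coincides with the ancestor-or-self at time $s$ of some sample $i<j$ with $t_i\ge s$; $a_j$ is either a sample time (direct descent) or not a sample time (a branch point). Sample $i\le k$ is dead in $\mathbf{G}_k$ if $a_j=t_i$ for some $i<j\le k$, live otherwise; $\mathrm{live}(\mathbf{G}_k)$ is the set of sample times of live samples. Branch points of $\mathbf{G}_k$: the $a_j$, $2\le j\le k$, that are not sample times. $\ell_k(t)=|\{e\in\mathrm{live}(\mathbf{G}_k):e>t\}|-|\{\text{branch points }b\text{ of }\mathbf{G}_k:b>t\}|$.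 For $j\le k$, $m(j,k)=|\{i: j<i\le k,\ a_i<t_j,\ \text{and } a_r\ne t_j \text{ for all } r<i\}|$, the number of samples attaching to the left of $t_j$ before sample $j$ dies (or before $k$ is reached). *)

From HB Require Import structures.
From mathcomp Require Import all_boot all_order all_algebra.
From mathcomp Require Import all_classical all_reals all_analysis.
Set Implicit Arguments. Unset Strict Implicit. Unset Printing Implicit Defensive.
Import Order.TTheory GRing.Theory Num.Theory.
Local Open Scope ring_scope.

(* Birth-death events are indexed by [q : int]
   (bi-infinite, stationary process), at strictly increasing times [tau q];
   at event [q] the individual in slot [d q] dies and the individual in slot
   [b q] gives birth, the offspring occupying slot [d q].
   Convention: the state at time s is the state just BEFORE the events at
   time s (left-continuous), so at a birth time the offspring's lineage is
   already that of its parent. *)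

Definition moran_realization (R : realType) (n : nat)
    (tau : int -> R) (d b : int -> 'I_n) : Prop :=
  [/\ (forall q1 q2 : int, q1 < q2 -> tau q1 < tau q2),
      (forall q, d q != b q),
      (forall M : R, exists q, M < tau q) &
      (forall M : R, exists q, tau q < M)].

(* going backwards across event q, a lineage sitting in slot d q moves to b q *)
Definition jump (n : nat) (d b : int -> 'I_n) (q : int) (y : 'I_n) : 'I_n :=
  if y == d q then b q else y.

(* [anc tau d b x t y s]: the ancestor at time s (s <= t) of the individual
   occupying slot x at time t occupies slot y at time s. *)
Inductive anc (R : realType) (n : nat) (tau : int -> R) (d b : int -> 'I_n)
    (x : 'I_n) (t : R) : 'I_n -> R -> Prop :=
| anc_base : anc tau d b x t x t
| anc_flat (y : 'I_n) (s' s : R) :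
    anc tau d b x t y s' -> s <= s' ->
    (forall q, ~ (s <= tau q /\ tau q < s')) -> anc tau d b x t y s
| anc_jump (y : 'I_n) (s' : R) (q : int) :
    anc tau d b x t y s' -> tau q < s' ->
    (forall q', ~ (tau q < tau q' /\ tau q' < s')) ->
    anc tau d b x t (jump d b q y) (tau q).

(* ---------- sampling and attachment times ----------
   Samples are indexed by i >= 1: sample i is taken at time [t i] and is the
   individual in slot [sig i] at that time. *)

Definition coincide_at (R : realType) (n : nat) (tau : int -> R)
    (d b : int -> 'I_n) (t : nat -> R) (sig : nat -> 'I_n) (j : nat) (s : R)
    : Prop :=
  exists i, [/\ (1 <= i < j)%N, s <= t i &
    exists y, anc tau d b (sig j) (t j) y s /\ anc tau d b (sig i) (t i) y s].

Definition is_attachment (R : realType) (n : nat) (tau : int -> R)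
    (d b : int -> 'I_n) (t : nat -> R) (sig : nat -> 'I_n) (j : nat) (aj : R)
    : Prop :=
  coincide_at tau d b t sig j aj /\
  (forall s, coincide_at tau d b t sig j s -> s <= aj).

Definition is_sample_time (R : realType) (t : nat -> R) (x : R) : bool :=
  `[< exists i, (1 <= i)%N /\ t i = x >].

Definition dead (R : realType) (t a : nat -> R) (k i : nat) : bool :=
  has (fun r => a r == t i) (iota i.+1 (k - i)).

Definition live_times (R : realType) (t a : nat -> R) (k : nat) : seq R :=
  [seq t i | i <- iota 1 k & ~~ dead t a k i].

Definition branch_points (R : realType) (t a : nat -> R) (k : nat) : seq R :=
  undup [seq a j | j <- iota 2 k.-1 & ~~ is_sample_time t (a j)].

Definition ell (R : realType) (t a : nat -> R) (k : nat) (x : R) : R :=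
  (size [seq e <- live_times t a k | x < e])%:R
  - (size [seq c <- branch_points t a k | x < c])%:R.

Definition mjk (R : realType) (t a : nat -> R) (j k : nat) : nat :=
  count (fun i => (a i < t j) && all (fun r => a r != t j) (iota 2 (i - 2)))
        (iota j.+1 (k - j)).

(* If sample [j] is still live in [G_K], then [ell_K(t_j) = m(j,K)]: the next
   sample adds a live sample time above [t_j], while its attachment time either
   lies below [t_j], which raises [m(j,K)] by one, or lies above [t_j], where it
   kills a live sample or creates a branch point, leaving [ell] unchanged.
   Exchanging the double sum, the terms of a fixed sample [r] telescope, since
   [ln (n/(n-m)) + ln ((n-m)/(n-m-1)) = ln (n/(n-m-1))] and [m(r,.)] grows by one
   exactly at the steps contributing a term.  The Moran dynamics enter only through
   [a_j <= t_(j-1)], the injectivity of [j |-> a_j] (an event merges just two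
   lineages), and [m(j,K) < n]. *)

From HB Require Import structures.
From mathcomp Require Import all_boot all_order all_algebra.
From mathcomp Require Import all_classical all_reals all_analysis.
From mathcomp Require Import zify ring lra.
Import Order.TTheory GRing.Theory Num.Theory.
Local Open Scope ring_scope.
Set Implicit Arguments. Unset Strict Implicit.

Section Ancestry.
Variables (R : realType) (n : nat) (tau : int -> R) (d b : int -> 'I_n).
Hypothesis tau_incr : forall q1 q2 : int, q1 < q2 -> tau q1 < tau q2.

Definition event_free (lo hi : R) := forall q, ~ (lo <= tau q /\ tau q < hi).

Lemma tau_le q1 q2 : (tau q1 <= tau q2) = (q1 <= q2).
Proof. exact: (le_mono tau_incr q1 q2). Qed.

Lemma tau_lt q1 q2 : (tau q1 < tau q2) = (q1 < q2).
Proof. by rewrite !ltNge tau_le. Qed.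

Lemma tau_inj : injective tau.
Proof. by move=> q1 q2 E; apply/le_anti; rewrite -!tau_le E lexx. Qed.

Lemma event_freeW lo hi lo' hi' :
  lo <= lo' -> hi' <= hi -> event_free lo hi -> event_free lo' hi'.
Proof.
move=> hlo hhi ef q [q1 q2]; apply: (ef q); split; first exact: le_trans q1.
exact: lt_le_trans hhi.
Qed.

Lemma event_free_open lo lo' hi : lo < lo' ->
  (forall q, ~ (lo < tau q /\ tau q < hi)) -> event_free lo' hi.
Proof.
by move=> hlo ef q [q1 q2]; apply: (ef q); split => //; apply: lt_le_trans q1.
Qed.

Variables (x : 'I_n) (T : R).
Notation anc := (anc tau d b x T).

Lemma anc_le y s : anc y s -> s <= T.
Proof.
elim=> // [y0 s' s0 _ IH h _ | y0 s' q _ IH h _]; first exact: le_trans IH.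
exact: le_trans (ltW h) IH.
Qed.

Lemma anc_top y : anc y T -> y = x.
Proof.
have gen s : anc y s -> s = T -> y = x.
  elim=> // [y0 s' s0 D IH h _ E | y0 s' q D IH h _ E].
    by apply: IH; apply/eqP; rewrite eq_le (anc_le D) -E h.
  by have := lt_le_trans h (anc_le D); rewrite -E ltxx.
by move/gen; apply.
Qed.

Lemma anc_between y s u : anc y s -> s <= u <= T -> exists z, anc z u.
Proof.
elim=> [|y0 s' s0 D IH h ef|y0 s' q D IH h ef] /andP[h1 h2].
- exists x; have -> : u = T by apply/eqP; rewrite eq_le h1 h2.
  exact: anc_base.
- case: (leP s' u) => hu; first by apply: IH; rewrite hu.
  by exists y0; apply: (anc_flat D (ltW hu)); apply: event_freeW ef.
- case: (leP s' u) => hu; first by apply: IH; rewrite hu.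
  move: h1; rewrite le_eqVlt => /orP[/eqP <-|h1].
    by exists (jump d b q y0); apply: anc_jump D h ef.
  exists y0; apply: (anc_flat D (ltW hu)) => q' [q1 q2].
  by apply: (ef q'); split => //; apply: lt_le_trans h1 q1.
Qed.

Lemma anc_forward y s u : anc y s -> s <= u <= T -> event_free s u -> anc y u.
Proof.
move=> D; elim: D u => [|y0 s' s0 D IH h ef|y0 s' q D IH h ef] u /andP[h1 h2] ef'.
- have -> : u = T by apply/eqP; rewrite eq_le h1 h2.
  exact: anc_base.
- case: (leP s' u) => hu.
    by apply: IH; [rewrite hu | apply: event_freeW ef'].
  by apply: (anc_flat D (ltW hu)); apply: event_freeW ef.
- suff -> : u = tau q by apply: anc_jump D h ef.
  apply/eqP; rewrite eq_le h1 andbT leNgt; apply/negP => hq.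
  by apply: (ef' q).
Qed.

Lemma anc_event_inv y q : anc y (tau q) -> tau q < T ->
  exists z s', [/\ anc z s', tau q < s',
    (forall q', ~ (tau q < tau q' /\ tau q' < s')) & y = jump d b q z].
Proof.
move=> D hT; have [s Es] : exists s, s = tau q by exists (tau q).
rewrite -Es in D; elim: D Es => [|y0 s' s0 D IH h ef|y0 s' q' D IH h ef] Es.
- by move: hT; rewrite -Es ltxx.
- suff E : s' = s0 by subst s'; apply: IH.
  apply/eqP; rewrite eq_le h andbT leNgt; apply/negP => hs.
  by apply: (ef q); rewrite -Es lexx.
- by move/tau_inj: Es => Eq; subst q'; exists y0, s'; split.
Qed.

Lemma anc_across_event y q u : anc y (tau q) -> tau q < u <= T ->
  (forall q', tau q < tau q' -> u < tau q') ->
  exists2 v, anc v u & y = jump d b q v.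
Proof.
move=> D /andP[hqu huT] gap.
have [z [s' [Dz hs' ef ->]]] := anc_event_inv D (lt_le_trans hqu huT).
exists z => //; case: (leP s' u) => hs.
  apply: anc_forward Dz _ _; first by rewrite hs.
  move=> q' [q1 q2]; have := gap q' (lt_le_trans hs' q1).
  by rewrite ltNge (ltW q2).
exact: anc_flat Dz (ltW hs) (event_free_open hqu ef).
Qed.

End Ancestry.

Lemma exists_between_all (R : realFieldType) (s : R) (l : seq R) :
  all (fun z => s < z) l -> exists2 u, s < u & all (fun z => u < z) l.
Proof.
elim: l => [|z l IH] /=; first by exists (s + 1); rewrite ?ltrDl.
case/andP=> sz /IH [u su ul]; have smid : s < (s + z) / 2 by lra.
have midz : (s + z) / 2 < z by lra.
exists (Num.min u ((s + z) / 2)); first by rewrite lt_min su smid.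
rewrite /= gt_min midz orbT /=.
by apply/allP => w /(allP ul) uw; rewrite gt_min uw.
Qed.

Lemma jump_collide (n : nat) (d b : int -> 'I_n) q y1 y2 :
  y1 != y2 -> jump d b q y1 = jump d b q y2 -> perm_eq [:: y1; y2] [:: d q; b q].
Proof.
rewrite /jump; case: (eqVneq y1 (d q)) => [->|_]; case: (eqVneq y2 (d q)) => [->|_].
- by [].
- by move=> _ <-.
- by move=> _ ->; apply/permP => P /=; rewrite addnCA.
- by move=> /eqP.
Qed.

Section SampleTimes.
Variables (R : realType) (t : nat -> R).
Hypothesis t_incr : forall i, (1 <= i)%N -> t i < t i.+1.

Lemma t_lt i j : (1 <= i)%N -> (i < j)%N -> t i < t j.
Proof.
move=> hi; elim: j => // j IH; rewrite ltnS leq_eqVlt => /orP[/eqP<-|h].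
  exact: t_incr.
by apply: lt_trans (IH h) (t_incr _); apply: leq_trans hi (ltnW h).
Qed.

Lemma t_le i j : (1 <= i)%N -> (i <= j)%N -> t i <= t j.
Proof. by move=> hi; rewrite leq_eqVlt => /orP[/eqP->//|/(t_lt hi)/ltW]. Qed.

Lemma t_inj i j : (1 <= i)%N -> (1 <= j)%N -> t i = t j -> i = j.
Proof.
move=> hi hj E; case: (ltngtP i j) => // h.
- by have := t_lt hi h; rewrite E ltxx.
- by have := t_lt hj h; rewrite E ltxx.
Qed.

End SampleTimes.

Section Attachment.
Variables (R : realType) (n : nat) (tau : int -> R) (d b : int -> 'I_n).
Variables (t : nat -> R) (sig : nat -> 'I_n) (a : nat -> R).
Hypothesis moran : moran_realization tau d b.
Hypothesis t_incr : forall i, (1 <= i)%N -> t i < t i.+1.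
Hypothesis sample_not_event : forall i q, (1 <= i)%N -> tau q != t i.
Hypothesis attach : forall j, (2 <= j)%N -> is_attachment tau d b t sig j (a j).

Let tau_incr : forall q1 q2 : int, q1 < q2 -> tau q1 < tau q2.
Proof. by case: moran. Qed.

Notation lineage i := (anc tau d b (sig i) (t i)).

Lemma next_event_after s : exists2 e, s < e & forall q, s < tau q -> e <= tau q.
Proof.
have [_ _ above below] := moran.
have [q1 hq1] := above s; have [q0 hq0] := below s.
have exP : exists k : nat, s < tau (q0 + k%:Z).
  have : q0 < q1 by rewrite -(tau_lt tau_incr) (lt_trans hq0 hq1).
  by exists `|q1 - q0|%N; have -> : q0 + `|q1 - q0|%N%:Z = q1 by lia.
case: (ex_minnP exP) => k sk kmin; exists (tau (q0 + k%:Z)) => // q sq.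
rewrite leNgt (tau_lt tau_incr); apply/negP => hq.
have hq0q : q0 < q by rewrite -(tau_lt tau_incr) (lt_trans hq0 sq).
have := kmin `|q - q0|%N; have -> : q0 + `|q - q0|%N%:Z = q by lia.
by move=> /(_ sq); lia.
Qed.

Definition quiet_after (s u : R) (j : nat) :=
  [/\ s < u, forall q, s < tau q -> u < tau q &
      forall l, (1 <= l <= j)%N -> s < t l -> u <= t l].

Lemma exists_quiet_after s j : exists u, quiet_after s u j.
Proof.
have [e se e_next] := next_event_after s.
have [|u su /= /andP[ue /allP ul]] :=
  @exists_between_all _ s (e :: [seq t l | l <- iota 1 j & s < t l]).
  by rewrite /= se all_map; apply/allP => l; rewrite mem_filter => /andP[].
exists u; split => // [q /e_next | l /andP[l1 lj] sl]; first exact: lt_le_trans ue.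
by apply/ltW/ul/mapP; exists l; rewrite // mem_filter sl mem_iota l1 add1n ltnS.
Qed.

Lemma quiet_afterW s u j j' : (j' <= j)%N -> quiet_after s u j -> quiet_after s u j'.
Proof.
move=> jj [su ev ut]; split=> // l /andP[l1 lj]; apply: ut.
by rewrite l1 (leq_trans lj jj).
Qed.

Lemma attach_max j i y u : (2 <= j)%N -> a j < u -> (1 <= i < j)%N -> u <= t i ->
  lineage j y u -> lineage i y u -> False.
Proof.
move=> hj hu hi hut Dj Di; have [_ amax] := attach hj.
suff : u <= a j by rewrite leNgt hu.
by apply: amax; exists i; split => //; exists y.
Qed.

Lemma attach_le_prev j : (2 <= j)%N -> a j <= t j.-1.
Proof.
move=> hj; have [[i [/andP[h1 h2] hs _]] _] := attach hj.
by apply: le_trans hs (t_le t_incr h1 _); rewrite -ltnS prednK // ltnW.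
Qed.

Lemma attach_direct j u : (2 <= j)%N -> (forall q, tau q != a j) ->
  quiet_after (a j) u j -> exists2 i, (1 <= i < j)%N & t i = a j /\ lineage j (sig i) u.
Proof.
move=> hj noev [su ev ut]; have [[i [hi hs [Y [Dj Di]]]] _] := attach hj.
have [i1 ij] := andP hi.
have ef : event_free tau (a j) u.
  move=> q [q1 q2]; move: q1; rewrite le_eqVlt => /orP[/eqP Eq|/ev].
    by move: (noev q); rewrite Eq eqxx.
  by rewrite ltNge (ltW q2).
have utj : u <= t j.
  apply: ut; first by rewrite leqnn (leq_trans _ hj).
  exact: le_lt_trans hs (t_lt t_incr i1 ij).
have Dju : lineage j Y u by apply: anc_forward Dj _ ef; rewrite (ltW su) utj.
have ti : t i = a j.
  apply/eqP; rewrite eq_le hs andbT leNgt; apply/negP => sti.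
  have uti : u <= t i by apply: ut sti; rewrite i1 ltnW.
  have Diu : lineage i Y u by apply: anc_forward Di _ ef; rewrite (ltW su) uti.
  exact: attach_max hj su hi uti Dju Diu.
exists i => //; split => //; rewrite -ti in Di.
by rewrite -(anc_top Di).
Qed.

Lemma attach_at_event j q u : (2 <= j)%N -> tau q = a j -> quiet_after (a j) u j ->
  exists i v v', [/\ (1 <= i < j)%N, u <= t i, lineage j v u, lineage i v' u &
    perm_eq [:: v; v'] [:: d q; b q]].
Proof.
move=> hj Eq [su ev ut]; have [[i [hi hs [Y [Dj Di]]]] _] := attach hj.
have [i1 ij] := andP hi.
have sti : a j < t i by rewrite lt_neqAle hs andbT -Eq sample_not_event.
have stj : a j < t j by apply: lt_trans sti (t_lt t_incr i1 ij).
have gap q' : tau q < tau q' -> u < tau q' by rewrite Eq; apply: ev.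
have uti : u <= t i by apply: ut sti; rewrite i1 ltnW.
have utj : u <= t j by apply: ut stj; rewrite leqnn (leq_trans _ hj).
have quj : tau q < u <= t j by rewrite Eq su utj.
have qui : tau q < u <= t i by rewrite Eq su uti.
rewrite -Eq in Dj Di.
have [v Dv Jv] := anc_across_event tau_incr Dj quj gap.
have [v' Dv' Jv'] := anc_across_event tau_incr Di qui gap.
exists i, v, v'; split => //; apply: jump_collide; last by rewrite -Jv -Jv'.
by apply/eqP => vv'; rewrite -vv' in Dv'; apply: attach_max hj su hi uti Dv Dv'.
Qed.

Lemma attach_neq i1 i2 : (2 <= i1)%N -> (i1 < i2)%N -> a i1 != a i2.
Proof.
move=> h1 h12; apply/eqP => E; have h2 : (2 <= i2)%N by apply: leq_trans h1 (ltnW h12).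
have [u qu2] := exists_quiet_after (a i2) i2.
have qu1 : quiet_after (a i1) u i1 by rewrite E; apply: quiet_afterW (ltnW h12) qu2.
have [su _ ut] := qu2.
have max2 i y : (1 <= i < i2)%N -> u <= t i -> lineage i2 y u -> lineage i y u -> False.
  exact: attach_max h2 su.
have hi12 : (1 <= i1 < i2)%N by rewrite h12 andbT; apply: ltnW.
have ut1 : u <= t i1.
  apply: ut; first by rewrite (leq_trans _ h1) ltnW.
  by rewrite -E; apply: le_lt_trans (attach_le_prev h1) (t_lt t_incr _ _); lia.
(* Just after [a_i1], sample [i2] would still meet [i1] or the partner of [i1]:
   an event merges only the two slots [d q] and [b q], and at a non-event time
   both samples descend directly from the same sample. *)
case: (pselect (exists q, tau q = a i1)) => [[q Eq]|noev].
  have [i' [v1 [v' [hi' ut' D1 D' P1]]]] := attach_at_event h1 Eq qu1.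
  have [i [v2 [v [_ _ D2 _ P2]]]] := attach_at_event h2 (etrans Eq E) qu2.
  have : v2 \in [:: v1; v'] by rewrite (perm_mem P1) -(perm_mem P2) mem_head.
  rewrite !inE => /orP[/eqP E2|/eqP E2]; rewrite {}E2 in D2.
    exact: max2 hi12 ut1 D2 D1.
  have hi'12 : (1 <= i' < i2)%N by case/andP: hi' => -> /ltn_trans ->.
  exact: max2 hi'12 ut' D2 D'.
have noev1 q : tau q != a i1 by apply/eqP => Eq; apply: noev; exists q.
have noev2 q : tau q != a i2 by rewrite -E.
have [i' /andP[i'1 _] [ti' D1]] := attach_direct h1 noev1 qu1.
have [i /andP[i_1 _] [ti D2]] := attach_direct h2 noev2 qu2.
have ii' : i = i' by apply: (t_inj t_incr i_1 i'1); rewrite ti ti' E.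
by rewrite ii' in D2; apply: max2 hi12 ut1 D2 D1.
Qed.

Lemma attach_inj i1 i2 : (2 <= i1)%N -> (2 <= i2)%N -> a i1 = a i2 -> i1 = i2.
Proof.
move=> h1 h2 E; case: (ltngtP i1 i2) => // h.
  by have := attach_neq h1 h; rewrite E eqxx.
by have := attach_neq h2 h; rewrite E eqxx.
Qed.

Lemma early_attachments_lt j (l : seq nat) : (1 <= j)%N -> uniq l ->
  (forall i, i \in l -> (j < i)%N /\ a i < t j) -> (size l < n)%N.
Proof.
move=> hj ul hl.
(* The ancestors at time [t_j] of the samples in [l], together with [sig j], are
   pairwise distinct: otherwise an attachment time would not be maximal. *)
have ancP i : exists y, i \in l -> lineage i y (t j).
  case: (boolP (i \in l)) => [/hl [ji ai]|_]; last by exists (sig j).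
  have [[i0 [_ _ [y [Dy _]]]] _] := attach (leq_ltn_trans hj ji).
  have aij : a i <= t j <= t i by rewrite (ltW ai) t_le // ltnW.
  by have [z Dz] := anc_between Dy aij; exists z.
have [f Df] := choice ancP.
have f_inj : {in l &, injective f}.
  move=> i1 i2 l1 l2 E; wlog lt12 : i1 i2 l1 l2 E / (i1 < i2)%N.
    by move=> WH; case: (ltngtP i1 i2) => // h; [apply: WH | apply/esym/WH].
  have [j1 _] := hl _ l1; have [j2 a2] := hl _ l2.
  have hi1 : (1 <= i1 < i2)%N by rewrite lt12 (leq_trans hj (ltnW j1)).
  have Di1 : lineage i1 (f i2) (t j) by rewrite -E; apply: Df.
  by case: (attach_max (leq_ltn_trans hj j2) a2 hi1 (t_le t_incr hj (ltnW j1)) (Df _ l2) Di1).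
have f_sig i : i \in l -> f i != sig j.
  move=> li; apply/eqP => E; have [ji ai] := hl _ li.
  apply: (attach_max (leq_ltn_trans hj ji) ai _ (lexx _) (Df _ li)); first by rewrite hj.
  by rewrite E; apply: anc_base.
have U : uniq (sig j :: map f l).
  rewrite /= map_inj_in_uniq // ul andbT; apply/mapP => -[i li E].
  by have := f_sig _ li; rewrite E eqxx.
have /uniq_leq_size : {subset sig j :: map f l <= enum 'I_n} by move=> y; rewrite mem_enum.
by rewrite size_enum_ord /= size_map; apply.
Qed.

Lemma mjk_lt j K : (1 <= j)%N -> (mjk t a j K < n)%N.
Proof.
move=> hj; rewrite /mjk -size_filter; apply: early_attachments_lt hj _ _.
  by rewrite filter_uniq // iota_uniq.
by move=> i; rewrite mem_filter mem_iota => /andP[/andP[ai _] /andP[ji _]].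
Qed.

End Attachment.

Lemma count_split (T : Type) (P Q : pred T) (s : seq T) :
  (count (fun x => P x && ~~ Q x) s + count (fun x => P x && Q x) s = count P s)%N.
Proof. by elim: s => //= x s <-; case: (P x); case: (Q x) => /=; lia. Qed.

Lemma iota_rcons m k : iota m k.+1 = rcons (iota m k) (m + k)%N.
Proof. by rewrite -cats1 -[k.+1]addn1 iotaD. Qed.

Lemma ln_div_telescope (R : realType) (x y z : R) : 0 < x -> 0 < y -> 0 < z ->
  ln (x / y) + ln (y / z) = ln (x / z).
Proof.
move=> x0 y0 z0; rewrite -lnM ?posrE ?divr_gt0 //.
by rewrite mulrA divfK // lt0r_neq0.
Qed.

Section Genealogy.
Variables (R : realType) (t a : nat -> R).
Hypothesis t_incr : forall i, (1 <= i)%N -> t i < t i.+1.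
Hypothesis attach_le : forall r, (2 <= r)%N -> a r <= t r.-1.
Hypothesis attach_inj : forall i1 i2, (2 <= i1)%N -> (2 <= i2)%N -> a i1 = a i2 -> i1 = i2.

Lemma attach_lt r j : (2 <= r <= j)%N -> a r < t j.
Proof.
case/andP=> hr hrj; apply: le_lt_trans (attach_le hr) (t_lt t_incr _ _); lia.
Qed.

Lemma dead_self K : dead t a K K = false.
Proof. by rewrite /dead subnn. Qed.

Lemma dead_step K r : (r <= K)%N -> dead t a K.+1 r = dead t a K r || (a K.+1 == t r).
Proof.
move=> hr; rewrite /dead subSn // iota_rcons -cats1 has_cat /= orbF.
by have -> : (r.+1 + (K - r) = K.+1)%N by lia.
Qed.

Lemma liveE j K : (1 <= j <= K)%N ->
  ~~ dead t a K j = all (fun r => a r != t j) (iota 2 K.-1).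
Proof.
case/andP=> hj hjK; rewrite /dead -all_predC.
have -> : K.-1 = (j.-1 + (K - j))%N by lia.
rewrite iotaD all_cat; have -> : (2 + j.-1 = j.+1)%N by lia.
suff -> : all (fun r => a r != t j) (iota 2 j.-1) by [].
apply/allP => r; rewrite mem_iota => /andP[r2 rj].
by rewrite lt_eqF // attach_lt // r2; lia.
Qed.

Lemma mjk_self j : mjk t a j j = 0%N.
Proof. by rewrite /mjk subnn. Qed.

Lemma mjk_step j K : (1 <= j <= K)%N ->
  mjk t a j K.+1 = (mjk t a j K + ((a K.+1 < t j)%R && ~~ dead t a K j))%N.
Proof.
move=> hjK; rewrite /mjk subSn ?(andP hjK).2 // iota_rcons -cats1 count_cat /= addn0.
have -> : (j.+1 + (K - j) = K.+1)%N by lia.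
by rewrite (liveE hjK); have -> : (K.+1 - 2 = K.-1)%N by lia.
Qed.

Definition live_above K x := count (fun i => ~~ dead t a K i && (x < t i)) (iota 1 K).

Definition branch_above K x :=
  count (fun r => ~~ is_sample_time t (a r) && (x < a r)) (iota 2 K.-1).

Lemma ellE K x : ell t a K x = (live_above K x)%:R - (branch_above K x)%:R.
Proof.
rewrite /ell /live_times /branch_points undup_id; last first.
  rewrite map_inj_in_uniq ?filter_uniq ?iota_uniq // => i1 i2.
  rewrite !mem_filter !mem_iota => /andP[_ /andP[h1 _]] /andP[_ /andP[h2 _]].
  exact: attach_inj.
rewrite !size_filter !count_map !count_filter /live_above /branch_above.
by congr (_%:R - _%:R); apply: eq_count => i /=; rewrite andbC.
Qed.

Lemma count_killed K x : (1 <= K)%N ->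
  count (fun i => ~~ dead t a K i && (x < t i) && (a K.+1 == t i)) (iota 1 K)
  = is_sample_time t (a K.+1) && (x < a K.+1).
Proof.
move=> hK; rewrite /is_sample_time; case: asboolP => [[i0 [hi0 E]]|nst] /=; last first.
  rewrite (eq_in_count (a2 := pred0)) ?count_pred0 // => i.
  rewrite mem_iota => /andP[hi _].
  by apply/negbTE/negP => /andP[_ /eqP Ei]; apply: nst; exists i.
have i0K : (i0 <= K)%N.
  rewrite leqNgt; apply/negP => Ki0; have := attach_le (hK : (2 <= K.+1)%N).
  by rewrite -E /= leNgt (t_lt t_incr hK Ki0).
have i0_live : ~~ dead t a K i0.
  apply/hasPn => r; rewrite mem_iota => /andP[i0r rK]; apply/negP => /eqP Er.
  have := attach_inj (leq_ltn_trans hi0 i0r) (hK : (2 <= K.+1)%N) (etrans Er E).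
  by move=> Er'; move: rK; rewrite Er'; lia.
rewrite (eq_in_count (a2 := fun i => (i == i0) && (x < a K.+1))); last first.
  move=> i; rewrite mem_iota => /andP[hi _] /=; rewrite -E.
  have -> : (t i0 == t i) = (i == i0).
    by apply/eqP/eqP => [/(t_inj t_incr hi0 hi)->|->].
  by case: (eqVneq i i0) => [->|_]; rewrite ?i0_live ?andbF ?andbT.
case: (x < a K.+1).
  rewrite (eq_count (a2 := pred1 i0)) => [|i]; last by rewrite andbT.
  by rewrite count_uniq_mem ?iota_uniq // mem_iota hi0 add1n ltnS i0K.
by rewrite (eq_count (a2 := pred0)) ?count_pred0 // => i; rewrite andbF.
Qed.

Lemma live_above_step K x : (1 <= K)%N ->
  (live_above K.+1 x + (is_sample_time t (a K.+1) && (x < a K.+1)%R)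
   = live_above K x + (x < t K.+1)%R)%N.
Proof.
move=> hK; rewrite -count_killed // /live_above.
rewrite iota_rcons -cats1 count_cat /= dead_self /= addn0 add1n.
rewrite -[in RHS](count_split _ (fun i => a K.+1 == t i)).
rewrite (eq_in_count (a1 := fun i => ~~ dead t a K.+1 i && (x < t i))
    (a2 := fun i => ~~ dead t a K i && (x < t i) && ~~ (a K.+1 == t i))).
  by rewrite addnAC.
move=> i; rewrite mem_iota => /andP[_ hi]; rewrite dead_step; last by rewrite -ltnS -add1n.
by case: (dead t a K i); case: (x < t i); case: (a K.+1 == t i).
Qed.

Lemma ell_step K x : (1 <= K)%N ->
  ell t a K.+1 x = ell t a K x + ((x < t K.+1)%R : nat)%:R - ((x < a K.+1)%R : nat)%:R.
Proof.
move=> hK; rewrite !ellE.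
have /(congr1 (fun m => m%:R : R)) := live_above_step x hK; rewrite !natrD => E.
have -> : branch_above K.+1 x
    = (branch_above K x + (~~ is_sample_time t (a K.+1) && (x < a K.+1)%R))%N.
  rewrite /branch_above; have -> : K.+1.-1 = K.-1.+1 by rewrite prednK.
  by rewrite iota_rcons -cats1 count_cat /= addn0 (_ : 2 + K.-1 = K.+1)%N //; lia.
have -> : ((x < a K.+1)%R : nat)%:R = (is_sample_time t (a K.+1) && (x < a K.+1)%R : nat)%:R
    + (~~ is_sample_time t (a K.+1) && (x < a K.+1)%R : nat)%:R :> R.
  by case: is_sample_time; rewrite /= ?add0r ?addr0.
by rewrite natrD; lra.
Qed.

Lemma ell_self j : (1 <= j)%N -> ell t a j (t j) = 0.
Proof.
move=> hj; rewrite ellE /live_above /branch_above.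
rewrite (eq_in_count (a2 := pred0)) ?count_pred0 => [|i]; last first.
  by rewrite mem_iota => /andP[hi ij]; rewrite ltNge t_le ?andbF //; lia.
rewrite (eq_in_count (a2 := pred0)) ?count_pred0 ?subr0 // => r.
by rewrite mem_iota => /andP[hr rj]; rewrite ltNge (ltW (attach_lt _)) ?andbF ?hr //; lia.
Qed.

Lemma ell_live j K : (1 <= j <= K)%N -> ~~ dead t a K j ->
  ell t a K (t j) = (mjk t a j K)%:R.
Proof.
case/andP=> hj; elim: K => [|K IH]; first by rewrite leqn0 => /eqP Ej; rewrite Ej in hj.
rewrite leq_eqVlt => /orP[/eqP <-|]; first by rewrite ell_self // mjk_self.
rewrite ltnS => hjK; rewrite dead_step // negb_or => /andP[hd aj].
rewrite ell_step ?(leq_trans hj hjK) // IH // mjk_step ?hj // hd andbT natrD.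
rewrite (t_lt t_incr hj (hjK : (j < K.+1)%N)).
by case: (ltgtP (a K.+1) (t j)) aj => //= _ _; rewrite ?addr0 ?subr0 ?addrK.
Qed.

Lemma big_live_times j (F : R -> R) :
  \sum_(e <- live_times t a j | a j.+1 < e) F e
  = \sum_(1 <= r < j.+1 | ~~ dead t a j r && (a j.+1 < t r)) F (t r).
Proof. by rewrite /live_times big_map big_filter_cond /index_iota subn1. Qed.

Variable n : nat.
Hypothesis mjk_lt : forall j K, (1 <= j)%N -> (mjk t a j K < n)%N.

Let F j x := ln ((n%:R - ell t a j x) / (n%:R - ell t a j x - 1)).

Lemma sum_live_terms_telescope r K : (1 <= r <= K)%N ->
  \sum_(1 <= j < K | (r <= j)%N && ~~ dead t a j r && (a j.+1 < t r)) F j (t r)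
  = ln (n%:R / (n%:R - (mjk t a r K)%:R)).
Proof.
case/andP=> hr; elim: K => [|K IH]; first by rewrite leqn0 => /eqP Er; rewrite Er in hr.
rewrite leq_eqVlt => /orP[/eqP <-|]; last rewrite ltnS => hrK.
  have n0 : n%:R != 0 :> R by rewrite pnatr_eq0 -lt0n (leq_ltn_trans _ (mjk_lt r hr)).
  rewrite mjk_self subr0 divff // ln1 big1_seq // => j /andP[/andP[/andP[rj _] _]].
  by rewrite mem_index_iota (leq_gtF rj) andbF.
rewrite big_mkcond big_nat_recr ?(leq_trans hr hrK) //= -big_mkcond IH // mjk_step ?hr //.
have := mjk_lt K.+1 hr; rewrite mjk_step ?hr // hrK.
case: (boolP (dead t a K r)) => [_|live]; first by rewrite andbF addr0 addn0.
case: (a K.+1 < t r); last by rewrite addr0 addn0.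
rewrite addn1 /F ell_live ?hr // => hm; set m := mjk t a r K in hm *.
have hmR : m%:R + 1 < n%:R :> R by rewrite natr1 ltr_nat.
have m0 : 0 <= m%:R :> R by exact: ler0n.
rewrite ln_div_telescope -?natr1 ?opprD ?addrA //; lra.
Qed.

Lemma sum_live_terms k :
  \sum_(1 <= j < k) \sum_(e <- live_times t a j | a j.+1 < e) F j e
  = \sum_(1 <= j < k) ln (n%:R / (n%:R - (mjk t a j k)%:R)).
Proof.
transitivity (\sum_(1 <= j < k)
    \sum_(1 <= r < k | (r <= j)%N && ~~ dead t a j r && (a j.+1 < t r)) F j (t r)).
  apply: eq_big_nat => j /andP[_ jk]; rewrite big_live_times (big_nat_widen _ _ _ _ _ jk).
  by apply: eq_bigl => r; rewrite ltnS andbC andbA.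
rewrite (exchange_big_dep_nat xpredT) //; apply: eq_big_nat => r /andP[r1 rk].
by rewrite -sum_live_terms_telescope ?r1 ?(ltnW rk).
Qed.

End Genealogy.

Theorem lemma4 (R : realType) (n : nat) (tau : int -> R) (d b : int -> 'I_n)
    (t : nat -> R) (sig : nat -> 'I_n) (a : nat -> R) :
  (2 <= n)%N ->
  moran_realization tau d b ->
  (forall i, (1 <= i)%N -> t i < t i.+1) ->
  (forall (i : nat) (q : int), (1 <= i)%N -> tau q != t i) ->
  (forall j, (2 <= j)%N -> is_attachment tau d b t sig j (a j)) ->
  forall k, (2 <= k)%N ->
  \sum_(1 <= j < k) \sum_(e <- live_times t a j | a j.+1 < e)
      ln ((n%:R - ell t a j e) / (n%:R - ell t a j e - 1))
  = \sum_(1 <= j < k) ln (n%:R / (n%:R - (mjk t a j k)%:R)).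
Proof.
move=> _ moran t_incr sample_not_event attach k _.
apply: sum_live_terms => // [r hr | i1 i2 h1 h2 | j K hj].
- exact: attach_le_prev t_incr attach _ hr.
- exact: attach_inj moran t_incr sample_not_event attach _ _ h1 h2.
- exact: mjk_lt t_incr attach _ K hj.
Qed.
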